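(* Let $\varphi=\frac{1+\sqrt5}{2}$ and, for every integer $k$, let $F_k=\frac{\varphi^k-(-1/\varphi)^k}{\varphi+1/\varphi}$ (so $F_0=0$, $F_1=F_2=1$, $F_{k}=F_{k-1}+F_{k-2}$). Let $b$, $b^+$, $N$ be linear operators on a complex inner product space, with $b^+$ the adjoint of $b$ and $N$ hermitian, satisfying $$bb^+-\varphi\, b^+b=\left(-\tfrac1\varphi\right)^N,\qquad [N,b^+]=b^+,\qquad [N,b]=-b,$$ where $\left(-\frac1\varphi\right)^N$ acts on any eigenvector of $N$ with eigenvalue $k$ as multiplication by $\left(-\frac1\varphi\right)^k$. Suppose there is a vacuum vector $|0\rangle$ with $\langle 0|0\rangle=1$, $b|0\rangle=0$ and $N|0\rangle=0$. For $n\ge 0$ set $|n\rangle=\frac{(b^+)^n}{\sqrt{F_1F_2\cdots F_n}}|0\rangle$. Then for every $n\ge0$: $N|n\rangle=n|n\rangle$, $b^+b|n\rangle=F_n|n\rangle$, $bb^+|n\rangle=F_{n+1}|n\rangle$, the vectors $|n\rangle$ are orthonormal, and the Hamiltonian $H=\frac{\hbar\omega}{2}(b^+b+bb^+)$ satisfies $H|n\rangle=E_n|n\rangle$ with $$E_n=\frac{\hbar\omega}{2}F_{n+2}.$$ In particular $E_{n+1}-E_n=\frac{\hbar\omega}{2}F_{n+1}$ and $\lim_{n\to\infty}E_{n+1}/E_n=\varphi$.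
   Context: $\hbar>0$ and $\omega>0$ are constants. The empty product $F_1\cdots F_0$ equals $1$. *)

From HB Require Import structures.
From mathcomp Require Import all_boot all_order all_algebra.
From mathcomp Require Import all_classical all_reals all_analysis.
From mathcomp Require Import complex.
Set Implicit Arguments. Unset Strict Implicit. Unset Printing Implicit Defensive.
Import Order.TTheory GRing.Theory Num.Theory.
Local Open Scope ring_scope.

Definition phi {R : realType} : R := (1 + Num.sqrt 5) / 2.

Definition Fib {R : realType} (k : int) : R :=
  (phi ^ k - (- phi^-1) ^ k) / (phi + phi^-1).

Definition cR {R : realType} (x : R) : R[i] := (x%:C)%C.

(* [dot] is a complex inner product on V (linear in the second argument,
   conjugate-linear in the first, as in Dirac's bra-ket notation). *)
Definition inner_product {R : realType} {V : lmodType R[i]}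
    (dot : V -> V -> R[i]) : Prop :=
  [/\ (forall (u v w : V) (a : R[i]), dot u (a *: v + w) = a * dot u v + dot u w),
      (forall u v : V, dot u v = Num.conj (dot v u)),
      (forall u : V, 0 <= dot u u) &
      (forall u : V, dot u u = 0 -> u = 0)].

Definition is_adjoint {R : realType} {V : lmodType R[i]}
    (dot : V -> V -> R[i]) (A B : V -> V) : Prop :=
  forall u v : V, dot u (A v) = dot (B u) v.

Definition self_adjoint {R : realType} {V : lmodType R[i]}
    (dot : V -> V -> R[i]) (A : V -> V) : Prop := is_adjoint dot A A.

Definition ket {R : realType} {V : lmodType R[i]} (bp : V -> V) (v0 : V)
    (n : nat) : V :=
  cR (Num.sqrt (\prod_(1 <= i < n.+1) Fib (i%:Z)))^-1 *: iter n bp v0.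

Definition Ham {R : realType} {V : lmodType R[i]} (hbar omega : R)
    (b bp : V -> V) (v : V) : V :=
  cR (hbar * omega / 2) *: (bp (b v) + b (bp v)).

Definition Energy {R : realType} (hbar omega : R) (n : nat) : R :=
  hbar * omega / 2 * Fib (n.+2)%:Z.

From Pilot Require Import Defs.
From HB Require Import structures.
From mathcomp Require Import all_boot all_order all_algebra.
From mathcomp Require Import all_classical all_reals all_analysis.
From mathcomp Require Import complex.
From mathcomp Require Import ring lra.
Import Order.TTheory GRing.Theory Num.Theory.
Import numFieldNormedType.Exports.
Local Open Scope classical_set_scope.
Local Open Scope ring_scope.

(* On the unnormalised states u_n = (b^+)^n |0>, the relation [N, b^+] = b^+
   gives N u_n = n u_n, so the deformed commutation relation can be evaluated
   at eigenvalue n; with Binet's recursion F_(n+1) = phi F_n + (-1/phi)^n this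
   yields b u_(n+1) = F_(n+1) u_n.  Moving b^+ across the inner product then
   gives <u_m|u_n> = delta_mn F_1 ... F_n, which is exactly the normalisation
   built into |n>, and H |n> = (hbar omega / 2) (F_n + F_(n+1)) |n>.  Finally
   F_(n+1)/F_n - phi = (-1/phi)^n / F_n tends to 0 since F_n >= 1. *)

Section GoldenRatio.
Variable R : realType.
Local Notation phi := (@phi R).
Local Notation F n := (@Fib R (Posz n)).

Lemma phi_gt1 : 1 < phi.
Proof.
have : Num.sqrt 1 < Num.sqrt (5 : R) by rewrite ltr_sqrt //; lra.
by rewrite sqrtr1 /phi ltr_pdivlMr // mul1r; lra.
Qed.

Lemma phi_gt0 : 0 < phi.
Proof. exact: lt_trans phi_gt1. Qed.

Lemma phi_sqr : phi ^+ 2 = phi + 1.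
Proof.
have sqrt5 : Num.sqrt (5 : R) ^+ 2 = 5 by rewrite sqr_sqrtr //; lra.
by rewrite /phi expr_div_n sqrrD sqrt5 expr1n; field.
Qed.

Lemma phi_subV : phi - phi^-1 = 1.
Proof.
apply: (mulIf (lt0r_neq0 phi_gt0)).
by rewrite mulrBl mulVf ?lt0r_neq0 ?phi_gt0 // -expr2 phi_sqr; ring.
Qed.

Lemma norm_oppV_phi_lt1 : `|- phi^-1| < 1.
Proof.
by rewrite normrN gtr0_norm ?invr_gt0 ?phi_gt0 // invf_lt1 ?phi_gt0 ?phi_gt1.
Qed.

Lemma FibE n : F n = (phi ^+ n - (- phi^-1) ^+ n) / (phi + phi^-1).
Proof. by rewrite /Fib -!exprnP. Qed.

Lemma FibS n : F n.+1 = phi * F n + (- phi^-1) ^+ n.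
Proof.
have phi_neq0 := lt0r_neq0 phi_gt0.
have : phi + phi^-1 != 0 by rewrite lt0r_neq0 // addr_gt0 ?invr_gt0 ?phi_gt0.
rewrite !FibE !exprS; move: (phi ^+ n) ((- phi^-1) ^+ n) => a c D_neq0.
by field; rewrite phi_neq0 /= lt0r_neq0 // addr_gt0 // mulr_gt0 // phi_gt0.
Qed.

Lemma Fib0 : F 0 = 0.
Proof. by rewrite FibE !expr0 subrr mul0r. Qed.

Lemma Fib1 : F 1 = 1.
Proof. by rewrite FibS Fib0 mulr0 add0r expr0. Qed.

Lemma FibSS n : F n.+2 = F n.+1 + F n.
Proof.
rewrite !FibS exprS mulrDr mulrA -expr2 phi_sqr.
have -> : - phi^-1 = 1 - phi by have := phi_subV; lra.
ring.
Qed.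

Lemma Fib_ge1 n : 1 <= F n.+1.
Proof.
suff [] : 1 <= F n.+1 /\ 1 <= F n.+2 by [].
elim: n => [|n [ge1 ge1']]; first by rewrite FibSS Fib1 Fib0 addr0 lexx.
by split=> //; rewrite FibSS; lra.
Qed.

Lemma Fib_gt0 n : 0 < F n.+1.
Proof. exact: lt_le_trans (Fib_ge1 n). Qed.

Lemma prod_Fib_gt0 n : 0 < \prod_(1 <= i < n.+1) F i.
Proof.
elim: n => [|n IH]; first by rewrite big_geq.
by rewrite big_nat_recr //= mulr_gt0 // Fib_gt0.
Qed.

Lemma phi_sub_Fib_ratio n :
  phi - F n.+2 / F n.+1 = - ((- phi^-1) ^+ n.+1 / F n.+1).
Proof. by rewrite [F n.+2]FibS mulrDl mulfK ?lt0r_neq0 ?Fib_gt0 //; ring. Qed.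

Lemma Fib_ratio_cvg : (fun n : nat => F n.+1 / F n) @ \oo --> phi.
Proof.
rewrite -cvg_shiftS; apply/cvgrPdist_le => e e_gt0.
have := cvg_expr norm_oppV_phi_lt1; rewrite -cvg_shiftS.
move=> /cvgr0_norm_le /(_ e e_gt0); apply: filterS => n /= le_e.
rewrite phi_sub_Fib_ratio normrN normrM normfV (gtr0_norm (Fib_gt0 n)).
apply: le_trans le_e; rewrite ler_pdivrMr ?Fib_gt0 //.
by rewrite ler_peMr ?Fib_ge1.
Qed.

End GoldenRatio.

HB.instance Definition _ (R : realType) :=
  GRing.RMorphism.copy (@cR R) (real_complex R).

Lemma conj_cR (R : realType) (x : R) : Num.conj (cR x) = cR x.
Proof. by rewrite conj_Creal // /cR complex_real. Qed.

Section InnerProduct.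
Context {R : realType} {V : lmodType R[i]} {dot : V -> V -> R[i]}.
Hypothesis dot_inner : inner_product dot.

Lemma dot0r u : dot u 0 = 0.
Proof.
have [linr _ _ _] := dot_inner; have := linr u 0 0 1.
rewrite scaler0 addr0 mul1r => dot_u0.
by apply: (addrI (dot u 0)); rewrite addr0 -dot_u0.
Qed.

Lemma dotZr u v a : dot u (a *: v) = a * dot u v.
Proof.
by have [linr _ _ _] := dot_inner; rewrite -[a *: v]addr0 linr dot0r addr0.
Qed.

Lemma dot0l u : dot 0 u = 0.
Proof. by have [_ dotC _ _] := dot_inner; rewrite dotC dot0r conjC0. Qed.

Lemma dotZl u v a : dot (a *: u) v = Num.conj a * dot u v.
Proof.
by have [_ dotC _ _] := dot_inner; rewrite dotC dotZr rmorphM /= -dotC.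
Qed.

Lemma is_adjoint_sym {A B : V -> V} : is_adjoint dot A B -> is_adjoint dot B A.
Proof.
have [_ dotC _ _] := dot_inner.
by move=> adjAB u v; rewrite dotC -adjAB -dotC.
Qed.

End InnerProduct.

Lemma EnergyS_sub (R : realType) (hbar omega : R) n :
  Energy hbar omega n.+1 - Energy hbar omega n = hbar * omega / 2 * Fib n.+1%:Z.
Proof. by rewrite /Energy (FibSS R n.+1); ring. Qed.

Lemma Energy_ratio_cvg (R : realType) (hbar omega : R) : hbar * omega != 0 ->
  (fun n : nat => Energy hbar omega n.+1 / Energy hbar omega n) @ \oo --> phi.
Proof.
move=> hbar_omega_neq0; have := Fib_ratio_cvg R; rewrite -2!cvg_shiftS.
suff -> : (fun n : nat => Energy hbar omega n.+1 / Energy hbar omega n)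
        = (fun n : nat => Fib n.+3%:Z / Fib n.+2%:Z) by [].
apply/funext => n; rewrite /Energy invfM mulrACA mulfV ?mul1r //.
by rewrite mulf_neq0 ?invr_eq0.
Qed.

Section Ladder.
Context {R : realType} {V : lmodType R[i]} {dot : V -> V -> R[i]}.
Context {b bp N : {linear V -> V}} {v0 : V}.
Hypotheses (dot_inner : inner_product dot) (bp_adj : is_adjoint dot b bp).
Hypothesis deformed_comm : forall (k : int) (v : V), N v = cR (k%:~R) *: v ->
  b (bp v) - cR phi *: bp (b v) = cR ((- phi^-1) ^ k) *: v.
Hypothesis N_bp_comm : forall v : V, N (bp v) - bp (N v) = bp v.
Hypotheses (vac_norm : dot v0 v0 = 1) (b_vac : b v0 = 0) (N_vac : N v0 = 0).

Local Notation u n := (iter n bp v0).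
Local Notation F n := (@Fib R (Posz n)).
Local Notation ket := (ket bp v0).

Lemma N_iter n : N (u n) = cR n%:R *: u n.
Proof.
elim: n => [|n IH]; first by rewrite N_vac rmorph_nat scale0r.
move/eqP: (N_bp_comm (u n)); rewrite subr_eq => /eqP /=; rewrite IH linearZ /= => ->.
by rewrite -natr1 rmorphD rmorph1 scalerDl scale1r addrC.
Qed.

Lemma b_iterS n : b (u n.+1) = cR (F n.+1) *: u n.
Proof.
elim: n => [|n IH].
  have := deformed_comm 0 v0; rewrite N_vac rmorph0 scale0r => /(_ erefl).
  by rewrite b_vac linear0 scaler0 subr0 expr0z Fib1 => ->.
move/eqP: (deformed_comm n.+1 _ (N_iter n.+1)); rewrite subr_eq => /eqP /= ->.
rewrite IH linearZ /= scalerA -scalerDl -rmorphM -rmorphD.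
by rewrite [F n.+2]FibS addrC -exprnP.
Qed.

Lemma bp_b_iter n : bp (b (u n)) = cR (F n) *: u n.
Proof.
case: n => [|n]; first by rewrite /= b_vac linear0 Fib0 rmorph0 scale0r.
by rewrite b_iterS linearZ.
Qed.

Lemma dot_iter m n :
  dot (u m) (u n) = (m == n)%:R * cR (\prod_(1 <= i < n.+1) F i).
Proof.
have bp_b_adj := is_adjoint_sym dot_inner bp_adj.
elim: m n => [|m IH] [|n] /=.
- by rewrite vac_norm big_geq // rmorph1 mulr1.
- by rewrite bp_b_adj b_vac (dot0l dot_inner) mul0r.
- by rewrite -bp_adj b_vac (dot0r dot_inner) mul0r.
rewrite -bp_adj b_iterS (dotZr dot_inner) IH eqSS.
case: (m =P n) => [<-|_]; last by rewrite !mul0r mulr0.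
by rewrite [in RHS]big_nat_recr //= [in RHS]rmorphM !mul1r mulrC.
Qed.

Lemma dot_ket m n : dot (ket m) (ket n) = (m == n)%:R.
Proof.
rewrite /Defs.ket (dotZl dot_inner) (dotZr dot_inner) dot_iter conj_cR.
case: eqP => [->|_]; last by rewrite !mul0r !mulr0.
have P_gt0 := prod_Fib_gt0 R n.
rewrite mul1r mulrA -!rmorphM -expr2 exprVn sqr_sqrtr ?ltW //.
by rewrite mulVf ?lt0r_neq0 // rmorph1.
Qed.

Lemma N_ket n : N (ket n) = cR n%:R *: ket n.
Proof. by rewrite /Defs.ket linearZ /= N_iter !scalerA mulrC. Qed.

Lemma bp_b_ket n : bp (b (ket n)) = cR (F n) *: ket n.
Proof. by rewrite /Defs.ket !linearZ /= bp_b_iter !scalerA mulrC. Qed.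

Lemma b_bp_ket n : b (bp (ket n)) = cR (F n.+1) *: ket n.
Proof. by rewrite /Defs.ket !linearZ /= -iterS b_iterS !scalerA mulrC. Qed.

Lemma Ham_ket (hbar omega : R) n :
  Ham hbar omega b bp (ket n) = cR (Energy hbar omega n) *: ket n.
Proof.
rewrite /Ham bp_b_ket b_bp_ket -scalerDl scalerA -rmorphD -rmorphM.
by rewrite /Energy FibSS addrC.
Qed.

End Ladder.

Theorem mainTheorem1 (R : realType) (hbar omega : R)
    (hhbar : 0 < hbar) (homega : 0 < omega)
    (V : lmodType R[i]) (dot : V -> V -> R[i])
    (b bp N : {linear V -> V}) (v0 : V) :
  inner_product dot ->
  is_adjoint dot b bp ->
  self_adjoint dot N ->
  (forall (k : int) (v : V), N v = cR (k%:~R) *: v ->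
      b (bp v) - cR phi *: bp (b v) = cR ((- phi^-1) ^ k) *: v) ->
  (forall v : V, N (bp v) - bp (N v) = bp v) ->
  (forall v : V, N (b v) - b (N v) = - b v) ->
  dot v0 v0 = 1 -> b v0 = 0 -> N v0 = 0 ->
  (forall n : nat, N (ket bp v0 n) = cR n%:R *: ket bp v0 n) /\
      (forall n : nat, bp (b (ket bp v0 n)) = cR (Fib n%:Z) *: ket bp v0 n) /\
      (forall n : nat, b (bp (ket bp v0 n)) = cR (Fib n.+1%:Z) *: ket bp v0 n) /\
      (forall m n : nat, dot (ket bp v0 m) (ket bp v0 n) = (m == n)%:R) /\
      (forall n : nat, Ham hbar omega b bp (ket bp v0 n)
                        = cR (Energy hbar omega n) *: ket bp v0 n) /\
      (forall n : nat, Energy hbar omega n.+1 - Energy hbar omega n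
                        = hbar * omega / 2 * Fib n.+1%:Z) /\
      ((fun n : nat => Energy hbar omega n.+1 / Energy hbar omega n)
         @ \oo --> (phi : R)).
Proof.
move=> dot_inner bp_adj _ deformed_comm N_bp_comm _ vac_norm b_vac N_vac.
split; first exact: (N_ket N_bp_comm N_vac).
split; first exact: (bp_b_ket deformed_comm N_bp_comm b_vac N_vac).
split; first exact: (b_bp_ket deformed_comm N_bp_comm b_vac N_vac).
split; first exact: (dot_ket dot_inner bp_adj deformed_comm N_bp_comm).
split; first exact: (Ham_ket deformed_comm N_bp_comm b_vac N_vac).
split; first exact: EnergyS_sub.
by apply: Energy_ratio_cvg; rewrite mulf_neq0 ?lt0r_neq0.
Qed.
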